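(* For all integers $n\geq 0$ and all real $x\in(0,\pi)$, $$\sum_{k=0}^{n}(n-k+1)\sin\bigl((2k+1/2)x\bigr)>0 .$$ *)

From Stdlib Require Import Reals.

(* Summing twice by parts: multiplying by [4 sin^2 x] telescopes the double sum
   of [sin ((2k + 1/2) x)], and with [t = x/2], [N = 4n + 5] the sum becomes a
   positive multiple of [N sin t - (N-1) sin^3 t - sin (N t)].  This is positive
   for [N >= 5] and [0 < t < pi/2]: when [N t <= 3] the Taylor bounds for [sin]
   suffice, and when [N t > 3] already [(N-1) sin t > 1], which forces
   [N sin t - (N-1) sin^3 t > 1 >= sin (N t)]. *)

From Stdlib Require Import Reals Lra Psatz.
Open Scope R_scope.

Lemma sin_lb_expand a : sin_lb a = a - a^3/6 + a^5/120 - a^7/5040.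
Proof.
  unfold sin_lb, sin_approx, sin_term; cbn [sum_f_R0 Nat.mul Nat.add].
  repeat rewrite fact_simpl, mult_INR; cbn [Factorial.fact]; simpl INR.
  field.
Qed.

Lemma sin_ub_expand a : sin_ub a = a - a^3/6 + a^5/120 - a^7/5040 + a^9/362880.
Proof.
  unfold sin_ub, sin_approx, sin_term; cbn [sum_f_R0 Nat.mul Nat.add].
  repeat rewrite fact_simpl, mult_INR; cbn [Factorial.fact]; simpl INR.
  field.
Qed.

Lemma sin_ge_cubic t : 0 <= t <= 2 -> t - t^3/6 <= sin t.
Proof.
  intros Ht; pose proof PI2_3_2.
  destruct (SIN t) as [Hlb _]; try lra.
  rewrite sin_lb_expand in Hlb.
  assert (H5 : 0 <= t^5) by (apply pow_le; lra).
  assert (t^7 <= 4 * t^5).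
  { replace (t^7) with (t^5 * (t*t)) by ring.
    assert (Htt : t * t <= 4) by nra.
    pose proof (Rmult_le_compat_l _ _ _ H5 Htt); lra. }
  lra.
Qed.

Lemma sin_le_quintic y : 0 <= y <= 3 -> sin y <= y - y^3/6 + y^5/120.
Proof.
  intros Hy; pose proof PI2_3_2.
  destruct (SIN y) as [_ Hub]; try lra.
  rewrite sin_ub_expand in Hub.
  assert (H7 : 0 <= y^7) by (apply pow_le; lra).
  assert (y^9 <= 9 * y^7).
  { replace (y^9) with (y^7 * (y*y)) by ring.
    assert (Hyy : y * y <= 9) by nra.
    pose proof (Rmult_le_compat_l _ _ _ H7 Hyy); lra. }
  lra.
Qed.

Lemma sin_mul_lt_small N t : 5 <= N -> 0 < t -> N * t <= 3 ->
  sin (N * t) < N * sin t - (N - 1) * sin t ^ 3.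
Proof.
  intros HN Ht HNt.
  assert (Ht1 : t <= 3/5) by nra.
  assert (Hs : 0 < sin t) by (apply sin_gt_0; pose proof PI2_3_2; lra).
  assert (sin t ^ 3 <= t ^ 3) by (apply pow_incr; pose proof (sin_lt_x t Ht); lra).
  pose proof (sin_ge_cubic t ltac:(lra)).
  pose proof (sin_le_quintic (N * t) ltac:(nra)).
  (* the gap is at least [t^3 (N^3/6 - 7N/6 + 1 - N^3 (N t)^2/120)] *)
  assert (Hgap : 0 < N^3/6 - 7*N/6 + 1 - N^3 * (N*t)^2/120).
  { assert ((N*t)^2 <= 3^2) by (apply pow_incr; nra).
    assert (0 < N^3) by (apply pow_lt; lra).
    assert (N^3 * (N*t)^2 <= N^3 * 3^2) by (apply Rmult_le_compat_l; lra).
    assert (25 * N <= N^3) by (simpl; nra).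
    lra. }
  assert (0 < t ^ 3) by (apply pow_lt; lra).
  assert (0 < t^3 * (N^3/6 - 7*N/6 + 1 - N^3 * (N*t)^2/120)) by nra.
  nra.
Qed.

Lemma one_lt_pred_mul_sin N t : 5 <= N -> 3 < N * t -> t < PI / 2 ->
  1 < (N - 1) * sin t.
Proof.
  intros HN HNt Ht.
  set (u := 3 / N).
  assert (HuN : N * u = 3) by (unfold u; field; lra).
  assert (Hu : 0 < u <= 3/5).
  { split; [unfold u; apply Rdiv_lt_0_compat; lra | nra]. }
  assert (u < t) by nra.
  assert (sin u < sin t) by (apply sin_increasing_1; pose proof PI2_3_2; lra).
  pose proof (sin_ge_cubic u ltac:(lra)).
  assert (1 < (N - 1) * (u - u^3/6)).
  { replace ((N - 1) * (u - u^3/6)) with ((N*u - u) * (1 - u*u/6)) by field.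
    rewrite HuN; nra. }
  nra.
Qed.

Lemma cubic_gt_one N s : 0 < s < 1 -> 1 < (N - 1) * s ->
  1 < N * s - (N - 1) * s ^ 3.
Proof.
  intros Hs HNs.
  replace (N * s - (N - 1) * s ^ 3)
    with (1 + (1 - s) * ((N - 1) * s ^ 2 + (N - 1) * s - 1)) by ring.
  assert (0 <= (N - 1) * s ^ 2) by (replace ((N - 1) * s ^ 2) with ((N - 1) * s * s) by ring; nra).
  nra.
Qed.

Lemma sin_mul_lt N t : 5 <= N -> 0 < t < PI / 2 ->
  sin (N * t) < N * sin t - (N - 1) * sin t ^ 3.
Proof.
  intros HN Ht.
  destruct (Rle_lt_dec (N * t) 3) as [Hsmall | Hlarge].
  - now apply sin_mul_lt_small.
  - assert (sin t < 1) by (rewrite <- sin_PI2; apply sin_increasing_1; lra).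
    assert (0 < sin t) by (apply sin_gt_0; pose proof PI2_3_2; lra).
    pose proof (SIN_bound (N * t)).
    pose proof (cubic_gt_one N (sin t) ltac:(lra)
                  (one_lt_pred_mul_sin N t HN Hlarge ltac:(lra))).
    lra.
Qed.

Lemma sum_weighted_partial_sums (g : nat -> R) n :
  sum_f_R0 (fun k => (INR n - INR k + 1) * g k) n
  = sum_f_R0 (fun m => sum_f_R0 g m) n.
Proof.
  induction n as [|n IH]; [simpl; ring|].
  cbn [sum_f_R0].
  rewrite (sum_eq _ (fun k => (INR n - INR k + 1) * g k + g k)).
  - rewrite sum_plus, IH; ring.
  - intros i _; rewrite S_INR; ring.
Qed.

Lemma prod_sin_sin a b : 2 * sin b * sin a = cos (a - b) - cos (a + b).
Proof. rewrite cos_minus, cos_plus; ring. Qed.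

Lemma prod_sin_cos a b : 2 * sin b * cos a = sin (a + b) - sin (a - b).
Proof. rewrite sin_minus, sin_plus; ring. Qed.

Lemma sin_arith_sum a b m :
  2 * sin b * sum_f_R0 (fun k => sin (a + 2 * INR k * b)) m
  = cos (a - b) - cos (a + (2 * INR m + 1) * b).
Proof.
  induction m as [|m IH]; cbn [sum_f_R0].
  - rewrite prod_sin_sin; simpl INR.
    replace (a + 2 * 0 * b - b) with (a - b) by ring.
    replace (a + 2 * 0 * b + b) with (a + (2 * 0 + 1) * b) by ring.
    reflexivity.
  - rewrite Rmult_plus_distr_l, IH, prod_sin_sin, S_INR.
    replace (a + 2 * (INR m + 1) * b - b) with (a + (2 * INR m + 1) * b) by ring.
    replace (a + 2 * (INR m + 1) * b + b) with (a + (2 * (INR m + 1) + 1) * b) by ring.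
    ring.
Qed.

Lemma sin_arith_double_sum a b n :
  4 * sin b ^ 2 * sum_f_R0 (fun m => sum_f_R0 (fun k => sin (a + 2 * INR k * b)) m) n
  = 2 * (INR n + 1) * sin b * cos (a - b) + sin a - sin (a + (2 * INR n + 2) * b).
Proof.
  assert (Hstep : forall m, 4 * sin b ^ 2 * sum_f_R0 (fun k => sin (a + 2 * INR k * b)) m
    = 2 * sin b * cos (a - b) + sin (a + 2 * INR m * b) - sin (a + (2 * INR m + 2) * b)).
  { intros m.
    transitivity (2 * sin b * (2 * sin b * sum_f_R0 (fun k => sin (a + 2 * INR k * b)) m));
      [ring|].
    rewrite sin_arith_sum, Rmult_minus_distr_l, (prod_sin_cos (a + (2 * INR m + 1) * b)).
    replace (a + (2 * INR m + 1) * b + b) with (a + (2 * INR m + 2) * b) by ring.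
    replace (a + (2 * INR m + 1) * b - b) with (a + 2 * INR m * b) by ring.
    ring. }
  induction n as [|n IH].
  - transitivity (4 * sin b ^ 2 * sum_f_R0 (fun k => sin (a + 2 * INR k * b)) 0);
      [reflexivity|].
    rewrite Hstep; simpl INR.
    replace (a + 2 * 0 * b) with a by ring; ring.
  - rewrite tech5, Rmult_plus_distr_l, IH, Hstep, S_INR.
    replace (a + 2 * (INR n + 1) * b) with (a + (2 * INR n + 2) * b) by ring.
    ring.
Qed.

Lemma double_sum_closed_form_half_angle n t :
  2 * (INR n + 1) * sin (2 * t) * cos (t - 2 * t) + sin t - sin (t + (2 * INR n + 2) * (2 * t))
  = (4 * INR n + 5) * sin t - (4 * INR n + 5 - 1) * sin t ^ 3 - sin ((4 * INR n + 5) * t).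
Proof.
  replace (t - 2 * t) with (- t) by ring.
  replace (t + (2 * INR n + 2) * (2 * t)) with ((4 * INR n + 5) * t) by ring.
  rewrite cos_neg, sin_2a.
  assert (Hcos2 : cos t ^ 2 = 1 - sin t ^ 2).
  { pose proof (sin2_cos2 t) as Hpyth; unfold Rsqr in Hpyth; simpl; lra. }
  transitivity (4 * (INR n + 1) * sin t * cos t ^ 2 + sin t - sin ((4 * INR n + 5) * t));
    [ring|].
  rewrite Hcos2; ring.
Qed.

Theorem mainTheorem4 (n : nat) (x : R) (hx0 : 0 < x) (hxpi : x < PI) :
  0 < sum_f_R0 (fun k => (INR n - INR k + 1) * sin ((2 * INR k + 1 / 2) * x)) n.
Proof.
  rewrite sum_weighted_partial_sums.
  set (t := x / 2).
  rewrite (sum_eq _ (fun m => sum_f_R0 (fun k => sin (t + 2 * INR k * (2 * t))) m)).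
  2:{ intros m _; apply sum_eq; intros k _; f_equal; unfold t; field. }
  set (S := sum_f_R0 _ n).
  assert (Hclosed : 4 * sin (2 * t) ^ 2 * S
    = (4 * INR n + 5) * sin t - (4 * INR n + 5 - 1) * sin t ^ 3 - sin ((4 * INR n + 5) * t)).
  { unfold S; rewrite sin_arith_double_sum; apply double_sum_closed_form_half_angle. }
  assert (Hpos := sin_mul_lt (4 * INR n + 5) t ltac:(pose proof (pos_INR n); lra)
                    ltac:(unfold t; lra)).
  assert (0 < sin (2 * t)) by (apply sin_gt_0; unfold t; lra).
  assert (0 < 4 * sin (2 * t) ^ 2) by (simpl; nra).
  nra.
Qed.
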